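(* Let $\Gamma$ be a single-player extensive-form game and let $\mathscr C$ be the class of all single-player games sharing the same game tree and infoset partition as $\Gamma$ (with arbitrary nonnegative utilities). Then $$\mathrm{VoR}^{\mathrm{opt}}(\mathscr C)\le \max_{z\in\mathcal Z,\,h\in\mathcal H_c}\frac{\beta(h)}{\alpha(z)}.$$
   Context: An extensive-form game consists of a finite rooted tree with node set $\mathcal H$, leaves $\mathcal Z$, actions $A_h$ at nonterminal $h$; nonterminal nodes belong either to the single player (Player 1) or to chance; $\mathcal H_c$ is the set of chance nodes, each with a fixed distribution $\mathbb P_c(\cdot\mid h)$ on $A_h$. Player 1 has utility $u_1:\mathcal Z\to\mathbb R_{\ge0}$ and a partition $\mathcal I_1$ of its nodes into infosets, with a common action set $A_I$ for all nodes of an infoset $I$. The game tree is $\mathcal H$ with its actions and chance distributions. For a node $h$ at depth $d$, let $(h_0,\dots,h_{d-1})$ be the root-to-$h$ path (excluding $h$) and $\mathrm{obs}(h)=(i_k,I_k,a_k)_{k=0}^{d-1}$ with $i_k$ the player (1 or chance) at $h_k$, $I_k$ the infoset of $h_k$ (for player nodes), $a_k$ the action taken at $h_k$. A behavioral strategy $\pi$ assigns $\pi(\cdot\mid I)\in\Delta(A_I)$ to each $I$; $\mathbb P(z\mid\pi)$ is the reach probability of $z$; $U_1(\pi)=\sum_z\mathbb P(z\mid\pi)u_1(z)$; $u_1(\mathrm{opt}(\Gamma))=\max_\pi U_1(\pi)$. $\mathrm{pr}_1(\Gamma)$ has the same tree and utilities, with each $I\in\mathcal I_1$ partitioned by $h\sim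 h'\iff\mathrm{obs}_1(h)=\mathrm{obs}_1(h')$, where $\mathrm{obs}_1$ is the subsequence of $\mathrm{obs}$ with $i_k=1$. $\mathrm{VoR}^{\mathrm{opt}}(\Gamma)=u_1(\mathrm{opt}(\mathrm{pr}_1(\Gamma)))/u_1(\mathrm{opt}(\Gamma))$, and $\mathrm{VoR}^{\mathrm{opt}}(\mathscr C)=\sup_{\Gamma\in\mathscr C}\mathrm{VoR}^{\mathrm{opt}}(\Gamma)$. Absentmindedness coefficient: for $z\in\mathcal Z$, $I\in\mathcal I_1$ and $a\in A_I$, let $n_z(I)=|\{k:I_k=I\}|$, $n_z(a)=|\{k:I_k=I,a_k=a\}|$, $p_z(a)=n_z(a)/n_z(I)$, and $\alpha(z)=\prod_{I\in\mathcal I_1:n_z(I)>1}\ \prod_{a\in A_I:n_z(a)>0}p_z(a)^{n_z(a)}\in(0,1]$. Branching factor: for a chance node $h$ and $a\in A_h$, let $H_{ha}$ be the set of chance nodes in the subtree rooted at the child of $h$ reached by $a$; set $b_h(a)=1$ if $H_{ha}=\emptyset$ and $b_h(a)=\max_{h'\in H_{ha}}\beta(h')$ otherwise, and $\beta(h)=\sum_{a\in A_h}b_h(a)$ (defined recursively bottom-up). By convention, $\max_{h\in\mathcal H_c}\beta(h)=1$ if $\mathcal H_c=\emptyset$. *)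

From HB Require Import structures.
From mathcomp Require Import all_boot all_order all_algebra.
From mathcomp Require Import classical_sets reals.
Set Implicit Arguments. Unset Strict Implicit. Unset Printing Implicit Defensive.
Import Order.TTheory GRing.Theory Num.Theory.
Local Open Scope ring_scope.
Local Open Scope classical_set_scope.

(* A single-player extensive-form game tree.  [L] is the type of infoset
   labels of Player 1.  The actions at a node are the positions 0,1,... of
   its list of children.
   - [Leaf]          : a terminal node z;
   - [PNode J cs]    : a Player-1 node in infoset I; action i leads to cs`_i;
   - [CNode pcs]     : a chance node; action i has probability pcs`_i.1 and
                       leads to pcs`_i.2. *)
Inductive tree (R : Type) (L : Type) : Type :=
| Leaf : tree R L
| PNode : L -> seq (tree R L) -> tree R L
| CNode : seq (R * tree R L) -> tree R L.
Arguments Leaf {R L}.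

Section Game.
Variable R : realType.

Fixpoint wf_game (L : Type) (nA : L -> nat) (t : tree R L) : Prop :=
  match t with
  | Leaf => True
  | PNode J cs =>
      (0 < nA J)%N /\ size cs = nA J /\
      (fix go (cs : seq (tree R L)) : Prop :=
         match cs with [::] => True | c :: cs' => wf_game nA c /\ go cs' end) cs
  | CNode pcs =>
      pcs <> [::] /\ \sum_(pc <- pcs) pc.1 = 1 /\
      (fix go (pcs : seq (R * tree R L)) : Prop :=
         match pcs with
         | [::] => True
         | pc :: pcs' => 0 <= pc.1 /\ wf_game nA pc.2 /\ go pcs'
         end) pcs
  end.

Fixpoint infosets (L : Type) (t : tree R L) : seq L :=
  match t with
  | Leaf => [::]
  | PNode J cs => J :: flatten (map (@infosets L) cs)
  | CNode pcs => flatten (map (fun pc => infosets pc.2) pcs)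
  end.

Definition is_strat (L : eqType) (nA : L -> nat) (t : tree R L)
    (pi : L -> nat -> R) : Prop :=
  forall I, I \in infosets t ->
    (forall a, 0 <= pi I a) /\ \sum_(a < nA I) pi I a = 1.

(* Expected utility U_1(pi) = sum_z P(z | pi) u(z); leaves are identified by
   their root-to-leaf action path (a [seq nat]), so a utility is a function
   [u : seq nat -> R] evaluated at leaf paths. *)
Fixpoint EU (L : Type) (pi : L -> nat -> R) (u : seq nat -> R) (t : tree R L)
    : R :=
  match t with
  | Leaf => u [::]
  | PNode J cs =>
      (fix go (i : nat) (cs : seq (tree R L)) : R :=
         match cs with
         | [::] => 0
         | c :: cs' => pi J i * EU pi (fun s => u (i :: s)) c + go i.+1 cs'
         end) 0%N cs
  | CNode pcs =>
      (fix go (i : nat) (pcs : seq (R * tree R L)) : R :=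
         match pcs with
         | [::] => 0
         | pc :: pcs' => pc.1 * EU pi (fun s => u (i :: s)) pc.2 + go i.+1 pcs'
         end) 0%N pcs
  end.

Definition optval (L : eqType) (nA : L -> nat) (t : tree R L)
    (u : seq nat -> R) : R :=
  sup [set EU pi u t | pi in [set pi | is_strat nA t pi]].

(* pr_1(Gamma): same tree, each Player-1 node relabelled by the pair
   (I, obs_1(h)), where obs_1(h) is the chronological list of Player-1
   (infoset, action) pairs on the path to h. *)
Fixpoint pr1 (L : Type) (o : seq (L * nat)) (t : tree R L)
    : tree R (L * seq (L * nat)) :=
  match t with
  | Leaf => Leaf
  | PNode J cs =>
      PNode (J, o)
        ((fix go (i : nat) (cs : seq (tree R L)) :=
            match cs with
            | [::] => [::]
            | c :: cs' => pr1 (rcons o (J, i)) c :: go i.+1 cs'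
            end) 0%N cs)
  | CNode pcs => CNode (map (fun pc => (pc.1, pr1 o pc.2)) pcs)
  end.

Fixpoint leaf_obs (L : Type) (t : tree R L) : seq (seq (L * nat)) :=
  match t with
  | Leaf => [:: [::]]
  | PNode J cs =>
      (fix go (i : nat) (cs : seq (tree R L)) :=
         match cs with
         | [::] => [::]
         | c :: cs' => map (cons (J, i)) (leaf_obs c) ++ go i.+1 cs'
         end) 0%N cs
  | CNode pcs => flatten (map (fun pc => leaf_obs pc.2) pcs)
  end.

Definition alpha (L : eqType) (o : seq (L * nat)) : R :=
  let nI (I : L) := count (pred1 I) (map fst o) in
  let na (I : L) (a : nat) := count (pred1 (I, a)) o in
  \prod_(I <- undup (map fst o) | (1 < nI I)%N)
    \prod_(a <- undup [seq x.2 | x <- o & x.1 == I])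
      ((na I a)%:R / (nI I)%:R) ^+ na I a.

Definition maxlist (l : seq R) : R :=
  match l with [::] => 0 | x :: l' => foldr Num.max x l' end.

Fixpoint betas (L : Type) (t : tree R L) : seq R :=
  match t with
  | Leaf => [::]
  | PNode J cs => flatten (map (@betas L) cs)
  | CNode pcs =>
      let bs := map (fun pc => betas pc.2) pcs in
      (\sum_(l <- bs) (if l is [::] then 1 else maxlist l)) :: flatten bs
  end.

(* max_{h in H_c} beta(h), with the convention 1 if H_c is empty. *)
Definition maxbeta (L : Type) (t : tree R L) : R :=
  if betas t is [::] then 1 else maxlist (betas t).

(* max_{z in Z, h in H_c} beta(h)/alpha(z)
   = (max_h beta(h)) * (max_z 1/alpha(z))  (all quantities are positive). *)
Definition vor_bound (L : eqType) (t : tree R L) : R :=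
  maxbeta t * maxlist [seq (alpha o)^-1 | o <- leaf_obs t].

End Game.

From HB Require Import structures.
From mathcomp Require Import all_boot all_order all_algebra.
From mathcomp Require Import classical_sets reals.
Import Order.TTheory GRing.Theory Num.Theory.
Set Implicit Arguments. Unset Strict Implicit. Unset Printing Implicit Defensive.
Local Open Scope ring_scope.

(* Both optima are compared with the perfect-information value V of the tree
   (maximum over the children at Player-1 nodes, expectation at chance nodes),
   which bounds the expected utility of every strategy under any infoset
   structure, in particular in pr_1(Gamma).  Induction on the tree yields one
   leaf z with V <= (max_h beta(h)) * P_c(z) * u(z): at a Player-1 node follow
   the best child; at a chance node pick the child whose leaf maximises
   P_c * u, the sum of the children's branching factors absorbing the
   expectation.  Conversely, the behavioral strategy playing at each infoset
   the empirical action frequencies along z reaches z with probability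
   alpha(z) * P_c(z), so u(opt(Gamma)) >= alpha(z) * P_c(z) * u(z). *)

(* The [fix] loops over lists of children in the game definitions are
   convertible to instances of [foldri] or [foldr]; this is how they are
   turned into big operators below. *)
Section IndexedFold.
Variables (A B C : Type) (op : B -> C -> C) (z : C).

Definition foldri (f : nat -> A -> B) : nat -> seq A -> C :=
  fix go i l := match l with [::] => z | x :: l' => op (f i x) (go i.+1 l') end.

Lemma foldriS f k l : foldri f k.+1 l = foldri (fun i => f i.+1) k l.
Proof. by elim: l k => //= x l IHl k; rewrite IHl. Qed.

Lemma foldriE f l d :
  foldri f 0 l = foldr op z (mkseq (fun i => f i (nth d l i)) (size l)).
Proof.
elim: l f => //= x l IHl f.
by rewrite foldriS IHl /mkseq /= (iotaDl 1 0) -map_comp.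
Qed.

End IndexedFold.

Lemma foldri_big (A T : Type) (op : T -> T -> T) z (f : nat -> A -> T) l d :
  foldri op z f 0 l = \big[op/z]_(i < size l) f i (nth d l i).
Proof.
rewrite (foldriE _ _ _ _ d) foldrE big_map.
by rewrite -(big_mkord xpredT (fun i => f i (nth d l i))) /index_iota subn0.
Qed.

Lemma foldri_cons (A B : Type) (f : nat -> A -> B) l d :
  foldri cons [::] f 0 l = mkseq (fun i => f i (nth d l i)) (size l).
Proof. by rewrite (foldriE _ _ _ _ d); elim: (mkseq _ _) => //= x s ->. Qed.

Lemma foldr_andP (A : Type) (F : A -> Prop -> Prop) (Q : A -> Prop) l d :
  (forall x P, F x P <-> Q x /\ P) ->
  foldr F True l <-> forall i, (i < size l)%N -> Q (nth d l i).
Proof.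
move=> FE; elim: l => [|x l IHl] /=; first by split.
rewrite FE IHl; split=> [[Qx Ql] [|i] //|Ql]; first exact: Ql.
by split=> [|i]; [exact: (Ql 0%N) | exact: (Ql i.+1)].
Qed.

Lemma flatten_mkseqP (T : eqType) (F : nat -> seq T) n y :
  reflect (exists2 i, (i < n)%N & y \in F i) (y \in flatten (mkseq F n)).
Proof.
apply: (iffP flatten_mapP) => -[i]; rewrite ?mem_iota => ? ?.
  by exists i.
by exists i; rewrite ?mem_iota.
Qed.

Lemma flatten_map_nthP (A : Type) (T : eqType) (h : A -> seq T) l d y :
  reflect (exists2 i, (i < size l)%N & y \in h (nth d l i))
          (y \in flatten (map h l)).
Proof.
have -> : map h l = mkseq (fun i => h (nth d l i)) (size l).
  by rewrite -[in LHS](mkseq_nth d l) /mkseq -map_comp.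
exact: flatten_mkseqP.
Qed.
Arguments flatten_map_nthP {A T h l} d {y}.

Lemma big_group_key (T K : eqType) (V : Type) (idx : V) (op : Monoid.com_law idx)
    (key : T -> K) (s : seq T) (F : T -> V) :
  \big[op/idx]_(x <- s) F x =
  \big[op/idx]_(k <- undup (map key s)) \big[op/idx]_(x <- s | key x == k) F x.
Proof.
under [RHS]eq_bigr do rewrite big_mkcond.
rewrite exchange_big /=; apply: eq_big_seq => x x_s.
rewrite -big_mkcond -big_filter.
have -> : [seq k <- undup (map key s) | key x == k] = [:: key x].
  rewrite (eq_filter (a2 := pred1 (key x))) => [|k]; last exact: eq_sym.
  by rewrite filter_pred1_uniq ?undup_uniq // mem_undup map_f.
by rewrite big_seq1.
Qed.

Lemma ler_term_sum (T : numDomainType) n (F : 'I_n -> T) j :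
  (forall i, 0 <= F i) -> F j <= \sum_i F i.
Proof. by move=> F_ge0; rewrite (bigD1 j) //= lerDl sumr_ge0. Qed.

Section Game.
Variable R : realType.

Section MaxList.
Implicit Types (x y M : R) (l : seq R).

Lemma maxlist_cons x l : maxlist (x :: l) = \big[Num.max/x]_(y <- l) y.
Proof. exact: foldrE. Qed.

Lemma le_maxlist y l : y \in l -> y <= maxlist l.
Proof.
case: l => // x l; rewrite inE maxlist_cons => /predU1P[->|y_l].
  exact: bigmax_ge_id.
exact: le_bigmax_seq.
Qed.

Lemma maxlist_le l M : l != [::] -> (forall y, y \in l -> y <= M) -> maxlist l <= M.
Proof.
case: l => // x l _ le_M; rewrite maxlist_cons big_seq.
by apply: bigmax_le => [|y y_l]; apply: le_M; rewrite inE ?y_l ?eqxx ?orbT.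
Qed.

End MaxList.

Definition shift_util (u : seq nat -> R) (i : nat) : seq nat -> R :=
  fun s => u (i :: s).

Section Tree.
Variable L : Type.
Implicit Types (nA : L -> nat) (t : tree R L) (cs : seq (tree R L))
  (pcs : seq (R * tree R L)).

Fixpoint tree_nth_ind (P : tree R L -> Prop) (PL : P Leaf)
    (PP : forall J cs, (forall i, P (nth Leaf cs i)) -> P (PNode J cs))
    (PC : forall pcs, (forall i, P (nth (0, Leaf) pcs i).2) -> P (CNode pcs))
    t : P t :=
  match t with
  | Leaf => PL
  (* [nth] recurses on the index, so [nth Leaf [::] i] only reduces to [Leaf]
     once [i] is destructed. *)
  | PNode J cs => PP J cs
      ((fix go cs : forall i, P (nth Leaf cs i) :=
          match cs return forall i, P (nth Leaf cs i) with
          | [::] => fun i => if i is 0 then PL else PL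
          | c :: cs' => fun i =>
              match i return P (nth Leaf (c :: cs') i) with
              | 0 => tree_nth_ind PL PP PC c
              | i'.+1 => go cs' i'
              end
          end) cs)
  | CNode pcs => PC pcs
      ((fix go pcs : forall i, P (nth (0, Leaf) pcs i).2 :=
          match pcs return forall i, P (nth (0, Leaf) pcs i).2 with
          | [::] => fun i => if i is 0 then PL else PL
          | pc :: pcs' => fun i =>
              match i return P (nth (0, Leaf) (pc :: pcs') i).2 with
              | 0 => tree_nth_ind PL PP PC pc.2
              | i'.+1 => go pcs' i'
              end
          end) pcs)
  end.

Fixpoint pinfo_value (u : seq nat -> R) t : R :=
  match t with
  | Leaf => u [::]
  | PNode _ cs =>
      (fix go i cs :=
         match cs with
         | [::] => 0
         | c :: cs' => Num.max (pinfo_value (shift_util u i) c) (go i.+1 cs')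
         end) 0%N cs
  | CNode pcs =>
      (fix go i pcs :=
         match pcs with
         | [::] => 0
         | pc :: pcs' => pc.1 * pinfo_value (shift_util u i) pc.2 + go i.+1 pcs'
         end) 0%N pcs
  end.

Inductive leaf_path : tree R L -> seq nat -> seq (L * nat) -> R -> Prop :=
| leaf_path_Leaf : leaf_path Leaf [::] [::] 1
| leaf_path_PNode J cs i s o p : (i < size cs)%N ->
    leaf_path (nth Leaf cs i) s o p ->
    leaf_path (PNode J cs) (i :: s) ((J, i) :: o) p
| leaf_path_CNode pcs i s o p : (i < size pcs)%N ->
    leaf_path (nth (0, Leaf) pcs i).2 s o p ->
    leaf_path (CNode pcs) (i :: s) o ((nth (0, Leaf) pcs i).1 * p).

Lemma EU_PNode pi u J cs : EU pi u (PNode J cs) =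
  \sum_(i < size cs) pi J i * EU pi (shift_util u i) (nth Leaf cs i).
Proof. exact: (foldri_big _ _ (fun i c => pi J i * EU pi (shift_util u i) c)). Qed.

Lemma EU_CNode pi u pcs : EU pi u (CNode pcs) =
  \sum_(i < size pcs)
     (nth (0, Leaf) pcs i).1 * EU pi (shift_util u i) (nth (0, Leaf) pcs i).2.
Proof. exact: (foldri_big _ _ (fun i pc => pc.1 * EU pi (shift_util u i) pc.2)). Qed.

Lemma pinfo_value_PNode u J cs : pinfo_value u (PNode J cs) =
  \big[Num.max/0]_(i < size cs) pinfo_value (shift_util u i) (nth Leaf cs i).
Proof. exact: (foldri_big _ _ (fun i c => pinfo_value (shift_util u i) c)). Qed.

Lemma pinfo_value_CNode u pcs : pinfo_value u (CNode pcs) =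
  \sum_(i < size pcs)
     (nth (0, Leaf) pcs i).1 * pinfo_value (shift_util u i) (nth (0, Leaf) pcs i).2.
Proof. exact: (foldri_big _ _ (fun i pc => pc.1 * pinfo_value (shift_util u i) pc.2)). Qed.

Lemma wf_PNode nA J cs : wf_game nA (PNode J cs) <->
  [/\ (0 < nA J)%N, size cs = nA J &
      forall i, (i < size cs)%N -> wf_game nA (nth Leaf cs i)].
Proof.
rewrite /= -[X in _ /\ _ /\ X]/(foldr (fun c P => wf_game nA c /\ P) True cs).
rewrite (foldr_andP (Q := wf_game nA) _ Leaf) //.
by split=> [[? []]|[]].
Qed.

Lemma wf_CNode nA pcs : wf_game nA (CNode pcs) <->
  [/\ (0 < size pcs)%N, \sum_(pc <- pcs) pc.1 = 1 &
      forall i, (i < size pcs)%N ->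
        0 <= (nth (0, Leaf) pcs i).1 /\ wf_game nA (nth (0, Leaf) pcs i).2].
Proof.
rewrite /= -[X in _ /\ _ /\ X]/
  (foldr (fun pc P => 0 <= pc.1 /\ wf_game nA pc.2 /\ P) True pcs).
rewrite (foldr_andP (Q := fun pc => 0 <= pc.1 /\ wf_game nA pc.2) _ (0, Leaf)).
  have -> : (pcs <> [::]) <-> (0 < size pcs)%N by case: pcs.
  by split=> [[? []]|[]].
by move=> pc P; rewrite and_assoc.
Qed.

Lemma leaf_obs_PNode J cs : leaf_obs (PNode J cs) =
  flatten (mkseq (fun i => map (cons (J, i)) (leaf_obs (nth Leaf cs i))) (size cs)).
Proof. exact: (foldriE cat [::] (fun i c => map (cons (J, i)) (leaf_obs c)) cs Leaf). Qed.

Lemma pinfo_value_ge0 nA u t : wf_game nA t -> (forall s, 0 <= u s) ->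
  0 <= pinfo_value u t.
Proof.
elim/tree_nth_ind: t u => [|J cs IHcs|pcs IHpcs] u wf u_ge0; first exact: u_ge0.
  by rewrite pinfo_value_PNode bigmax_ge_id.
case/wf_CNode: wf => _ _ wf_pcs; rewrite pinfo_value_CNode.
apply: sumr_ge0 => i _; have [q_ge0 wf_i] := wf_pcs i (ltn_ord i).
by rewrite mulr_ge0 // (IHpcs _ _ wf_i (fun s => u_ge0 _)).
Qed.

Lemma EU_ge0 nA pi u t : (forall I a, 0 <= pi I a) -> wf_game nA t ->
  (forall s, 0 <= u s) -> 0 <= EU pi u t.
Proof.
move=> pi_ge0; elim/tree_nth_ind: t u => [|J cs IHcs|pcs IHpcs] u wf u_ge0.
- exact: u_ge0.
- case/wf_PNode: wf => _ _ wf_cs; rewrite EU_PNode; apply: sumr_ge0 => i _.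
  by rewrite mulr_ge0 // (IHcs _ _ (wf_cs _ (ltn_ord i)) (fun s => u_ge0 _)).
- case/wf_CNode: wf => _ _ wf_pcs; rewrite EU_CNode; apply: sumr_ge0 => i _.
  have [q_ge0 wf_i] := wf_pcs i (ltn_ord i).
  by rewrite mulr_ge0 // (IHpcs _ _ wf_i (fun s => u_ge0 _)).
Qed.

Lemma le_maxbeta t y : y \in betas t -> y <= maxbeta t.
Proof. by rewrite /maxbeta; case: (betas t) => // x l; apply: le_maxlist. Qed.

Lemma maxbeta_le t M : 1 <= M -> (forall y, y \in betas t -> y <= M) ->
  maxbeta t <= M.
Proof. by rewrite /maxbeta; case: (betas t) => // x l _; apply: maxlist_le. Qed.

Lemma maxbeta_ge1 t : {in betas t, forall y, 1 <= y} -> 1 <= maxbeta t.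
Proof.
rewrite /maxbeta; case: (betas t) => // x l ge1.
exact: le_trans (ge1 x (mem_head _ _)) (le_maxlist (mem_head _ _)).
Qed.

Lemma betas_CNode pcs : betas (CNode pcs) =
  (\sum_(i < size pcs) maxbeta (nth (0, Leaf) pcs i).2)
    :: flatten (map (fun pc => betas pc.2) pcs).
Proof. by rewrite /= big_map (big_nth (0, Leaf)) big_mkord. Qed.

Lemma sum_maxbeta_CNode pcs :
  \sum_(i < size pcs) maxbeta (nth (0, Leaf) pcs i).2 <= maxbeta (CNode pcs).
Proof. by rewrite le_maxbeta // betas_CNode mem_head. Qed.

Lemma betas_ge1 nA t : wf_game nA t -> {in betas t, forall y, 1 <= y}.
Proof.
elim/tree_nth_ind: t => [|J cs IHcs|pcs IHpcs] // wf y.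
  case/wf_PNode: wf => _ _ wf_cs /(flatten_map_nthP Leaf)[i lt_i_cs].
  exact/IHcs/wf_cs.
case/wf_CNode: wf => size_gt0 _ wf_pcs.
have mb_ge1 i : (i < size pcs)%N -> 1 <= maxbeta (nth (0, Leaf) pcs i).2.
  by move=> lt_i_pcs; apply/maxbeta_ge1/IHpcs; case: (wf_pcs i lt_i_pcs).
rewrite betas_CNode inE => /predU1P[->|/(flatten_map_nthP (0, Leaf))[i lt_i_pcs]].
  rewrite (bigD1 (Ordinal size_gt0)) //= -[1]addr0 lerD ?mb_ge1 //.
  by apply: sumr_ge0 => i _; apply: le_trans ler01 (mb_ge1 i (ltn_ord i)).
by apply: IHpcs; case: (wf_pcs i lt_i_pcs).
Qed.

Lemma maxbeta_ge0 nA t : wf_game nA t -> 0 <= maxbeta t.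
Proof. by move=> wf; apply: le_trans ler01 (maxbeta_ge1 (betas_ge1 wf)). Qed.

Lemma maxbeta_nth_PNode nA J cs i :
  wf_game nA (PNode J cs) -> (i < size cs)%N ->
  maxbeta (nth Leaf cs i) <= maxbeta (PNode J cs).
Proof.
move=> wf lt_i_cs; apply: maxbeta_le => [|y y_i].
  exact/maxbeta_ge1/betas_ge1/wf.
by apply: le_maxbeta; apply/(flatten_map_nthP Leaf); exists i.
Qed.

Lemma leaf_path_prob_ge0 nA t s o p :
  wf_game nA t -> leaf_path t s o p -> 0 <= p.
Proof.
move=> + lp; elim: lp => // [J cs|pcs] i s' o' p' lt_i _ IH.
  by case/wf_PNode=> _ _ wf_cs; apply/IH/wf_cs.
by case/wf_CNode=> _ _ /(_ i lt_i)[q_ge0 wf_i]; rewrite mulr_ge0 ?IH.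
Qed.

Lemma leaf_path_actions nA t s o p :
  wf_game nA t -> leaf_path t s o p -> all (fun x => x.2 < nA x.1)%N o.
Proof.
move=> + lp; elim: lp => // [J cs|pcs] i s' o' p' lt_i _ IH.
  by case/wf_PNode=> _ size_cs wf_cs /=; rewrite -size_cs lt_i; apply/IH/wf_cs.
by case/wf_CNode=> _ _ /(_ i lt_i)[_ /IH].
Qed.

Definition dominating_leaf u t :=
  exists s o p, leaf_path t s o p /\ pinfo_value u t <= maxbeta t * (p * u s).

Lemma dominating_leaf_PNode nA u J cs :
  wf_game nA (PNode J cs) -> (forall s, 0 <= u s) ->
  (forall i, (i < size cs)%N -> dominating_leaf (shift_util u i) (nth Leaf cs i)) ->
  dominating_leaf u (PNode J cs).
Proof.
move=> wf u_ge0 dom_cs; have [nA_gt0 size_cs wf_cs] := (wf_PNode nA J cs).1 wf.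
have i0 : 'I_(size cs) by rewrite size_cs; exact: Ordinal nA_gt0.
pose V (i : 'I_(size cs)) := pinfo_value (shift_util u i) (nth Leaf cs i).
have [j _ V_max] := arg_maxP (i0 := i0) (P := xpredT) V isT.
have [s [o [p [lp V_j]]]] := dom_cs j (ltn_ord j).
exists (val j :: s), ((J, val j) :: o), p.
split; first exact: leaf_path_PNode (ltn_ord j) lp.
have wf_j := wf_cs j (ltn_ord j).
have {}V_j : V j <= maxbeta (PNode J cs) * (p * shift_util u j s).
  apply: le_trans V_j (ler_wpM2r _ (maxbeta_nth_PNode wf (ltn_ord j))).
  by rewrite mulr_ge0 ?u_ge0 ?(leaf_path_prob_ge0 wf_j lp).
rewrite pinfo_value_PNode; apply: bigmax_le => [|i _].
  exact: le_trans (pinfo_value_ge0 wf_j (fun s => u_ge0 _)) V_j.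
exact: le_trans (V_max i isT) V_j.
Qed.

Lemma dominating_leaf_CNode nA u pcs :
  wf_game nA (CNode pcs) -> (forall s, 0 <= u s) ->
  (forall i, (i < size pcs)%N ->
     dominating_leaf (shift_util u i) (nth (0, Leaf) pcs i).2) ->
  dominating_leaf u (CNode pcs).
Proof.
move=> wf u_ge0 dom_pcs; have [size_gt0 _ wf_pcs] := (wf_CNode nA pcs).1 wf.
pose q (i : 'I_(size pcs)) := (nth (0, Leaf) pcs i).1.
pose child (i : 'I_(size pcs)) := (nth (0, Leaf) pcs i).2.
have /fin_all_exists[w w_ok] : forall i, exists w : seq nat * seq (L * nat) * R,
    leaf_path (child i) w.1.1 w.1.2 w.2 /\
    pinfo_value (shift_util u i) (child i) <=
      maxbeta (child i) * (w.2 * shift_util u i w.1.1).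
  by move=> i; have [s [o [p ok]]] := dom_pcs i (ltn_ord i); exists (s, o, p).
pose F i := q i * (w i).2 * shift_util u i (w i).1.1.
have F_ge0 i : 0 <= F i.
  have [q_ge0 wf_i] := wf_pcs i (ltn_ord i).
  by rewrite !mulr_ge0 ?u_ge0 ?(leaf_path_prob_ge0 wf_i (w_ok i).1).
have [j _ F_max] := arg_maxP (i0 := Ordinal size_gt0) (P := xpredT) F isT.
exists (val j :: (w j).1.1), (w j).1.2, (q j * (w j).2).
split; first exact: leaf_path_CNode (ltn_ord j) (w_ok j).1.
rewrite pinfo_value_CNode.
apply: le_trans (ler_wpM2r (F_ge0 j) (sum_maxbeta_CNode pcs)); rewrite mulr_suml.
apply: ler_sum => i _; have [q_ge0 wf_i] := wf_pcs i (ltn_ord i).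
apply: le_trans (ler_wpM2l q_ge0 (w_ok i).2) _.
rewrite mulrCA; apply: (ler_wpM2l (maxbeta_ge0 wf_i)).
by rewrite mulrA; exact: F_max i isT.
Qed.

Lemma exists_dominating_leaf nA u t : wf_game nA t -> (forall s, 0 <= u s) ->
  dominating_leaf u t.
Proof.
elim/tree_nth_ind: t u => [|J cs IHcs|pcs IHpcs] u wf u_ge0.
- exists [::], [::], 1; split; first exact: leaf_path_Leaf.
  by rewrite /maxbeta /= !mul1r.
- apply: (dominating_leaf_PNode wf u_ge0) => i lt_i_cs.
  by apply: IHcs (fun s => u_ge0 _); case/wf_PNode: wf => _ _; apply.
- apply: (dominating_leaf_CNode wf u_ge0) => i lt_i_pcs.
  by apply: IHpcs (fun s => u_ge0 _); case/wf_CNode: wf => _ _ /(_ i lt_i_pcs)[].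
Qed.

Lemma EU_ge_leaf nA pi u t s o p : (forall I a, 0 <= pi I a) ->
  wf_game nA t -> (forall s, 0 <= u s) -> leaf_path t s o p ->
  (\prod_(x <- o) pi x.1 x.2) * p * u s <= EU pi u t.
Proof.
move=> pi_ge0 + + lp.
elim: lp u => {t s o p} [|J cs i s o p lt_i_cs _ IH|pcs i s o p lt_i_pcs _ IH] u wf u_ge0.
- by rewrite big_nil !mul1r.
- case/wf_PNode: wf => _ _ wf_cs; rewrite EU_PNode.
  apply: le_trans (ler_term_sum (Ordinal lt_i_cs) _) => [/=|k].
    rewrite big_cons -!mulrA ler_wpM2l // mulrA.
    exact: IH (shift_util u i) (wf_cs i lt_i_cs) (fun s => u_ge0 _).
  by rewrite mulr_ge0 ?(EU_ge0 pi_ge0 (wf_cs k (ltn_ord k)) (fun s => u_ge0 _)).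
- case/wf_CNode: wf => _ _ wf_pcs; rewrite EU_CNode.
  apply: le_trans (ler_term_sum (Ordinal lt_i_pcs) _) => [/=|k].
    have [q_ge0 wf_i] := wf_pcs i lt_i_pcs.
    rewrite mulrCA -!mulrA ler_wpM2l // !mulrA.
    exact: IH (shift_util u i) wf_i (fun s => u_ge0 _).
  have [q_ge0 wf_k] := wf_pcs k (ltn_ord k).
  by rewrite mulr_ge0 ?(EU_ge0 pi_ge0 wf_k (fun s => u_ge0 _)).
Qed.

End Tree.

Lemma pr1_PNode (L : Type) o J (cs : seq (tree R L)) : pr1 o (PNode J cs) =
  PNode (J, o) (mkseq (fun i => pr1 (rcons o (J, i)) (nth Leaf cs i)) (size cs)).
Proof.
exact: (congr1 (PNode (J, o)) (foldri_cons (fun i c => pr1 (rcons o (J, i)) c) cs Leaf)).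
Qed.

Lemma wf_pr1 (L : Type) (nA : L -> nat) o (t : tree R L) : wf_game nA t ->
  wf_game (fun k : L * seq (L * nat) => nA k.1) (pr1 o t).
Proof.
elim/tree_nth_ind: t o => [|J cs IHcs|pcs IHpcs] o //.
  case/wf_PNode=> nA_gt0 size_cs wf_cs; rewrite pr1_PNode.
  apply/wf_PNode; rewrite size_mkseq; split=> // i lt_i_cs.
  by rewrite nth_mkseq //; apply/IHcs/wf_cs.
case/wf_CNode=> size_gt0 sum_pcs wf_pcs; apply/wf_CNode.
rewrite big_map size_map; split=> // i lt_i_pcs; rewrite (nth_map (0, Leaf)) //=.
by have [q_ge0 wf_i] := wf_pcs i lt_i_pcs; split; last exact: IHpcs.
Qed.

Lemma pinfo_value_pr1 (L : Type) u o (t : tree R L) :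
  pinfo_value u (pr1 o t) = pinfo_value u t.
Proof.
elim/tree_nth_ind: t u o => [|J cs IHcs|pcs IHpcs] u o //.
  rewrite pr1_PNode !pinfo_value_PNode size_mkseq.
  by apply: eq_bigr => i _; rewrite nth_mkseq ?IHcs.
rewrite /pr1 -/pr1 !pinfo_value_CNode size_map.
by apply: eq_bigr => i _; rewrite (nth_map (0, Leaf)) ?IHpcs.
Qed.

Section Strategies.
Variables (L : eqType) (nA : L -> nat).
Implicit Types (t : tree R L) (cs : seq (tree R L)) (pcs : seq (R * tree R L)).

Lemma wf_nA_gt0 t I : wf_game nA t -> I \in infosets t -> (0 < nA I)%N.
Proof.
elim/tree_nth_ind: t => [|J cs IHcs|pcs IHpcs] //=.
  case/wf_PNode=> nA_gt0 _ wf_cs; rewrite inE => /predU1P[->//|].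
  by case/(flatten_map_nthP Leaf)=> i lt_i_cs; apply/IHcs/wf_cs.
case/wf_CNode=> _ _ wf_pcs /(flatten_map_nthP (0, Leaf))[i lt_i_pcs].
by apply: IHpcs; case: (wf_pcs i lt_i_pcs).
Qed.

Lemma is_strat_PNode J cs pi i : is_strat nA (PNode J cs) pi -> (i < size cs)%N ->
  is_strat nA (nth Leaf cs i) pi.
Proof.
move=> str lt_i_cs I I_i; apply: str; rewrite inE; apply/orP; right.
by apply/(flatten_map_nthP Leaf); exists i.
Qed.

Lemma is_strat_CNode pcs pi i : is_strat nA (CNode pcs) pi -> (i < size pcs)%N ->
  is_strat nA (nth (0, Leaf) pcs i).2 pi.
Proof.
move=> str lt_i_pcs I I_i; apply: str.
by apply/(flatten_map_nthP (0, Leaf)); exists i.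
Qed.

Lemma EU_le_pinfo_value pi u t : wf_game nA t -> is_strat nA t pi ->
  (forall s, 0 <= u s) -> EU pi u t <= pinfo_value u t.
Proof.
elim/tree_nth_ind: t u => [|J cs IHcs|pcs IHpcs] u wf str u_ge0 //.
  have [_ size_cs wf_cs] := (wf_PNode nA J cs).1 wf.
  have [pi_ge0 pi_sum1] := str J (mem_head _ _).
  rewrite EU_PNode pinfo_value_PNode.
  set M := \big[Num.max/0]_(i < size cs) _.
  apply: le_trans (_ : \sum_(i < size cs) pi J i * M <= _).
    apply: ler_sum => i _; apply: (ler_wpM2l (pi_ge0 i)).
    apply: le_trans (le_bigmax 0 _ i).
    apply: (IHcs i _ _ _ (fun s => u_ge0 _)); first exact: wf_cs _ (ltn_ord i).
    exact: is_strat_PNode str (ltn_ord i).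
  by rewrite -big_distrl /= size_cs pi_sum1 mul1r.
have [_ _ wf_pcs] := (wf_CNode nA pcs).1 wf.
rewrite EU_CNode pinfo_value_CNode; apply: ler_sum => i _.
have [q_ge0 wf_i] := wf_pcs i (ltn_ord i).
apply: (ler_wpM2l q_ge0); apply: (IHpcs i _ _ _ (fun s => u_ge0 _)) => //.
exact: is_strat_CNode str (ltn_ord i).
Qed.

Lemma mem_leaf_obs t s o p : leaf_path t s o p -> o \in leaf_obs t.
Proof.
elim=> {t s o p} [|J cs i s o p lt_i_cs _ IH|pcs i s o p lt_i_pcs _ IH].
- exact: mem_head.
- by rewrite leaf_obs_PNode; apply/flatten_mkseqP; exists i; rewrite // map_f.
- by apply/(flatten_map_nthP (0, Leaf)); exists i.
Qed.

Lemma uniform_is_strat t : wf_game nA t -> is_strat nA t (fun I _ => (nA I)%:R^-1).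
Proof.
move=> wf I I_t; split=> [a|]; first by rewrite invr_ge0.
by rewrite sumr_const card_ord -[LHS]mulr_natr mulVf // pnatr_eq0 -lt0n (wf_nA_gt0 wf I_t).
Qed.

Lemma optval_le_pinfo_value t u : wf_game nA t -> (forall s, 0 <= u s) ->
  optval nA t u <= pinfo_value u t.
Proof.
move=> wf u_ge0; apply: ge_sup => [|_ [pi str <-]]; last exact: EU_le_pinfo_value.
exists (EU (fun I _ => (nA I)%:R^-1) u t), (fun I _ => (nA I)%:R^-1) => //.
exact: uniform_is_strat.
Qed.

Lemma EU_le_optval t u pi : wf_game nA t -> (forall s, 0 <= u s) ->
  is_strat nA t pi -> EU pi u t <= optval nA t u.
Proof.
move=> wf u_ge0 str; apply: ub_le_sup; last by exists pi.
by exists (pinfo_value u t) => _ [pi' str' <-]; exact: EU_le_pinfo_value.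
Qed.

End Strategies.

Section Empirical.
Variables (L : eqType) (nA : L -> nat) (o : seq (L * nat)).

Definition visits (I : L) : nat := count (pred1 I) (map fst o).

Definition freq_strat (I : L) (a : nat) : R :=
  if visits I == 0%N then (nA I)%:R^-1
  else (count (pred1 (I, a)) o)%:R / (visits I)%:R.

Lemma visits_gt0 x : x \in o -> (0 < visits x.1)%N.
Proof. by move=> x_o; rewrite -has_count has_pred1 map_f. Qed.

Lemma count_le_visits x : (count (pred1 x) o <= visits x.1)%N.
Proof. by rewrite /visits count_map; apply: sub_count => y /eqP ->/=. Qed.

Lemma sum_count_actions I n : all (fun x => (x.1 == I) ==> (x.2 < n)%N) o ->
  (\sum_(a < n) count (pred1 (I, val a)) o)%N = visits I.
Proof.
rewrite /visits; elim: o => [|[J b] s IHs] /=; first by rewrite big1.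
case/andP=> b_lt /IHs {}IHs; rewrite big_split /= IHs; congr (_ + _)%N.
case: eqP b_lt => [<- /= b_lt|/eqP/negbTE neq_JI _]; last first.
  by rewrite big1 // => a _; rewrite xpair_eqE neq_JI.
rewrite (bigD1 (Ordinal b_lt)) //= eqxx big1 // => a.
by rewrite xpair_eqE eqxx -val_eqE /= eq_sym => /negbTE ->.
Qed.

Lemma freq_strat_ge0 I a : 0 <= freq_strat I a.
Proof. by rewrite /freq_strat; case: ifP; rewrite ?invr_ge0 ?divr_ge0. Qed.

Lemma freq_stratE x : x \in o ->
  freq_strat x.1 x.2 = (count (pred1 x) o)%:R / (visits x.1)%:R.
Proof. by move=> x_o; rewrite /freq_strat eqn0Ngt visits_gt0 // -surjective_pairing. Qed.

Lemma freq_is_strat t : wf_game nA t -> all (fun x => x.2 < nA x.1)%N o ->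
  is_strat nA t freq_strat.
Proof.
move=> wf o_ok I I_t; split=> [a|]; first exact: freq_strat_ge0.
rewrite /freq_strat; case: eqP => [_|/eqP visits_neq0].
  exact: (uniform_is_strat wf I_t).2.
rewrite -mulr_suml -natr_sum sum_count_actions ?divff ?pnatr_eq0 //.
by apply/allP=> x x_o; apply/implyP=> /eqP <-; exact: (allP o_ok).
Qed.

Lemma alpha_prod :
  alpha R o = \prod_(x <- o) ((count (pred1 x) o)%:R / (visits x.1)%:R).
Proof.
rewrite (big_group_key _ fst) /alpha /= [LHS]big_mkcond.
apply: eq_big_seq => I; rewrite mem_undup => I_o; case: ltnP => [_|visits_le1].
  rewrite -[RHS]big_filter.
  pose g a : R := (count (pred1 (I, a)) o)%:R / (visits I)%:R.
  transitivity (\prod_(x <- [seq x <- o | x.1 == I]) g x.2); last first.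
    by apply: eq_big_seq => -[J a]; rewrite mem_filter => /andP[/eqP /= -> _].
  rewrite -(big_map snd xpredT g) -[RHS]big_undup_iterop_count.
  apply: eq_big_seq => a _; rewrite Monoid.iteropE iter_mulr_1; congr (_ ^+ _).
  rewrite count_map count_filter; apply: eq_count => -[J b] /=.
  by rewrite xpair_eqE andbC.
apply/esym/big1_seq => x /andP[/eqP x1_I x_o].
have count_gt0 : (0 < count (pred1 x) o)%N by rewrite -has_count has_pred1.
have visits1 : visits x.1 = 1%N.
  by apply/eqP; rewrite eqn_leq visits_gt0 // x1_I visits_le1.
have count1 : count (pred1 x) o = 1%N.
  by apply/eqP; rewrite eqn_leq count_gt0 -visits1 count_le_visits.
by rewrite visits1 count1 divr1.
Qed.

Lemma prod_freq_strat : \prod_(x <- o) freq_strat x.1 x.2 = alpha R o.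
Proof. by rewrite alpha_prod; apply: eq_big_seq => x /freq_stratE. Qed.

Lemma alpha_gt0 : 0 < alpha R o.
Proof.
rewrite alpha_prod big_seq prodr_gt0 // => x x_o.
by rewrite divr_gt0 // ltr0n ?visits_gt0 // -has_count has_pred1.
Qed.

End Empirical.

End Game.

Theorem theorem2 (R : realType) (L : eqType) (nA : L -> nat) (t : tree R L)
    (wf : wf_game nA t)
    (u : seq nat -> R) (hu : forall s, 0 <= u s)
    (hpos : 0 < optval nA t u) :
  optval (fun k : L * seq (L * nat) => nA k.1) (pr1 [::] t) u / optval nA t u
    <= vor_bound t.
Proof.
have [s [o [p [leaf value_le]]]] := exists_dominating_leaf wf hu.
have opt_pr1_le : optval (fun k : L * seq (L * nat) => nA k.1) (pr1 [::] t) u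
                    <= maxbeta t * (p * u s).
  apply: le_trans value_le; rewrite -(pinfo_value_pr1 u [::]).
  exact/optval_le_pinfo_value/hu/wf_pr1.
have opt_ge : alpha R o * p * u s <= optval nA t u.
  rewrite -(prod_freq_strat R nA o).
  apply: le_trans (EU_le_optval wf hu (freq_is_strat wf (leaf_path_actions wf leaf))).
  exact: EU_ge_leaf (freq_strat_ge0 R nA o) wf hu leaf.
rewrite ler_pdivrMr // /vor_bound -mulrA; apply: le_trans opt_pr1_le _.
apply: (ler_wpM2l (maxbeta_ge0 wf)).
apply: le_trans (_ : (alpha R o)^-1 * optval nA t u <= _).
  by rewrite -(ler_pM2l (alpha_gt0 R o)) mulVKf ?gt_eqF ?alpha_gt0 // mulrA.
apply: (ler_wpM2r (ltW hpos)).
exact/le_maxlist/map_f/mem_leaf_obs/leaf.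
Qed.
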